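(* Let $\Omega$ be the solution of $\Omega e^\Omega=1$, let $c=\frac{1}{1+e^\Omega}$, and define $g:[0,1]\to[0,1]$ by $g(y)=\frac{c}{1-y}$ for $y<\frac{1-2c}{1-c}$, $g(y)=1-c$ for $\frac{1-2c}{1-c}\le y<1$, and $g(1)=1$. For $\tau,\gamma,\theta\in[0,1]$ let $$F(\tau,\gamma,\theta)=\int_0^\tau g(y)\,dy+\int_0^\gamma g(y)\,dy+(1-\tau)\big(1-\gamma-(1-\theta)g(\theta)\big)+\gamma\int_\tau^1\min\{g(y),1-g(\theta)\}\,dy.$$ Then $F(\tau,\gamma,\theta)\ge\Omega$ for all $\tau\in[0,1]$ and all $0\le\gamma\le\theta\le1$. *)

From Stdlib Require Import Reals Lra.
Open Scope R_scope.

Definition cst (Om : R) : R := 1 / (1 + exp Om).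

(* g : [0,1] -> [0,1]; values outside [0,1] are irrelevant. *)
Definition g (c y : R) : R :=
  if Rlt_dec y ((1 - 2 * c) / (1 - c)) then c / (1 - y)
  else if Rlt_dec y 1 then 1 - c
  else 1.

Definition hmin (c th : R) : R -> R := fun y => Rmin (g c y) (1 - g c th).

(* F(tau,gamma,theta), integrals given as Riemann integrals (their value does
   not depend on the integrability proofs). *)
Definition F (c tau gam th : R)
  (p1 : Riemann_integrable (g c) 0 tau)
  (p2 : Riemann_integrable (g c) 0 gam)
  (p3 : Riemann_integrable (hmin c th) tau 1) : R :=
  RiemannInt p1 + RiemannInt p2
  + (1 - tau) * (1 - gam - (1 - th) * g c th)
  + gam * RiemannInt p3.

(** With [c = Om / (1 + Om)] the breakpoint of [g] is [1 - Om], so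
    [G x = int_0^x g] equals [-c ln (1 - x)] below it and is affine above it.
    For [th < 1] both [g] and [1 - g th] are at least [c >= (1 - th) g th]; for
    [th = 1] the weight [(1 - th) g th] vanishes.  Either way the last two terms
    of [F] are at least [(1 - c)(1 - tau)(1 - gam)], and
    [G tau + G gam + (1 - c)(1 - tau)(1 - gam) >= Om] follows from
    [ln t <= t - 1] at [t = (1 - tau)(1 - gam) / Om], using [ln Om = -Om]. *)
From Stdlib Require Import Reals Lra Psatz.
From Coquelicot Require Import Coquelicot.
Open Scope R_scope.

Lemma ln_le_sub1 x : 0 < x -> ln x <= x - 1.
Proof. intros hx. pose proof (exp_ineq1_le (ln x)) as h. rewrite exp_ln in h; lra. Qed.

Section Omega.

Variable Om : R.
Hypothesis Om_exp : Om * exp Om = 1.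

Local Notation c := (cst Om).

Lemma omega_bounds : 1/2 < Om < 1.
Proof.
  assert (he : 0 < exp Om) by apply exp_pos.
  assert (hp : 0 < Om) by (destruct (Rlt_or_le 0 Om); nra).
  pose proof (exp_ineq1_le Om).
  assert (e12 : exp (1/2) < 2).
  { assert (E : exp (1/2) * exp (1/2) = exp 1) by (rewrite <- exp_plus; f_equal; lra).
    pose proof exp_le_3. pose proof (exp_pos (1/2)). nra. }
  split; [|nra].
  destruct (Rlt_or_le (1/2) Om) as [hlt|hle]; auto.
  assert (exp Om <= exp (1/2)) by (destruct hle; [left; apply exp_increasing|subst]; lra).
  nra.
Qed.

Lemma ln_omega : ln Om = - Om.
Proof.
  pose proof omega_bounds; pose proof (exp_pos Om).
  assert (E : Om = exp (- Om)) by (rewrite exp_Ropp; field_simplify_eq; lra).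
  rewrite E at 1. apply ln_exp.
Qed.

Lemma cst_omega : c * (1 + Om) = Om.
Proof.
  pose proof omega_bounds; pose proof (exp_pos Om).
  unfold cst. replace (exp Om) with (/ Om) by (field_simplify_eq; lra).
  field; lra.
Qed.

Lemma cst_bounds : 0 < c < 1/2.
Proof. pose proof omega_bounds; pose proof cst_omega; nra. Qed.

Lemma g_threshold : (1 - 2 * c) / (1 - c) = 1 - Om.
Proof.
  pose proof omega_bounds; pose proof cst_bounds; pose proof cst_omega.
  apply Rmult_eq_reg_r with (1 - c); [|lra].
  field_simplify; nra.
Qed.

Lemma g_low y : y < 1 - Om -> g c y = c / (1 - y).
Proof. intros hy. unfold g. rewrite g_threshold. destruct (Rlt_dec y (1 - Om)); lra. Qed.

Lemma g_high y : 1 - Om <= y < 1 -> g c y = 1 - c.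
Proof.
  intros hy. unfold g. rewrite g_threshold.
  destruct (Rlt_dec y (1 - Om)); [lra|]. destruct (Rlt_dec y 1); lra.
Qed.

Lemma g_one : g c 1 = 1.
Proof.
  pose proof omega_bounds. unfold g. rewrite g_threshold.
  destruct (Rlt_dec 1 (1 - Om)); [lra|]. destruct (Rlt_dec 1 1); lra.
Qed.

Lemma g_ge_cst y : 0 <= y <= 1 -> c <= g c y.
Proof.
  intros hy. pose proof cst_bounds; pose proof omega_bounds.
  destruct (Rlt_or_le y (1 - Om)); [|destruct (Rlt_or_le y 1)].
  - rewrite g_low by lra.
    apply Rmult_le_reg_r with (1 - y); [lra|].
    unfold Rdiv. rewrite Rmult_assoc, Rinv_l by lra. nra.
  - rewrite g_high; lra.
  - replace y with 1 by lra. rewrite g_one. lra.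
Qed.

Lemma g_le_compl_cst th : 0 <= th < 1 -> g c th <= 1 - c.
Proof.
  intros hth. pose proof cst_bounds; pose proof omega_bounds; pose proof cst_omega.
  destruct (Rlt_or_le th (1 - Om)); [|rewrite g_high; lra].
  rewrite g_low by lra.
  apply Rmult_le_reg_r with (1 - th); [lra|].
  unfold Rdiv. rewrite Rmult_assoc, Rinv_l by lra. nra.
Qed.

Lemma weight_le_cst th : 0 <= th <= 1 -> (1 - th) * g c th <= c.
Proof.
  intros hth. pose proof cst_bounds; pose proof omega_bounds; pose proof cst_omega.
  destruct (Rlt_or_le th (1 - Om)); [|destruct (Rlt_or_le th 1)].
  - rewrite g_low by lra. right. field. lra.
  - rewrite g_high; nra.
  - replace th with 1 by lra. lra.
Qed.

Lemma hmin_ge_weight th y : 0 <= th <= 1 -> 0 <= y <= 1 ->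
  (1 - th) * g c th <= hmin c th y.
Proof.
  intros hth hy. unfold hmin.
  pose proof (weight_le_cst th hth). pose proof (g_ge_cst y hy).
  apply Rmin_glb; [lra|].
  destruct (Rlt_or_le th 1).
  - pose proof (g_le_compl_cst th ltac:(lra)). lra.
  - replace th with 1 by lra. rewrite g_one. lra.
Qed.

Definition G x :=
  if Rle_dec x (1 - Om) then - c * ln (1 - x)
  else c * Om + (1 - c) * (x - (1 - Om)).

Lemma is_RInt_g_low x : 0 <= x <= 1 - Om -> is_RInt (g c) 0 x (- c * ln (1 - x)).
Proof.
  intros hx. pose proof omega_bounds.
  apply is_RInt_ext with (fun y => c / (1 - y)).
  { intros y hy. rewrite Rmin_left in hy by lra. rewrite Rmax_right in hy by lra.
    symmetry. apply g_low. lra. }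
  replace (- c * ln (1 - x)) with (minus (- c * ln (1 - x)) (- c * ln (1 - 0)))
    by (rewrite Rminus_0_r, ln_1; unfold minus, plus, opp; simpl; ring).
  apply (is_RInt_derive (fun y => - c * ln (1 - y))).
  - intros y hy. rewrite Rmin_left in hy by lra. rewrite Rmax_right in hy by lra.
    auto_derive; [lra|field; lra].
  - intros y hy. rewrite Rmin_left in hy by lra. rewrite Rmax_right in hy by lra.
    apply (ex_derive_continuous (K:=R_AbsRing) (V:=R_NormedModule)).
    auto_derive. lra.
Qed.

Lemma is_RInt_g_high x : 1 - Om <= x <= 1 ->
  is_RInt (g c) 0 x (c * Om + (1 - c) * (x - (1 - Om))).
Proof.
  intros hx. pose proof omega_bounds.
  replace (c * Om + (1 - c) * (x - (1 - Om)))
    with (plus (- c * ln (1 - (1 - Om))) (scal (x - (1 - Om)) (1 - c)))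
    by (replace (1 - (1 - Om)) with Om by ring; rewrite ln_omega;
        unfold plus, scal; simpl; unfold mult; simpl; ring).
  apply (is_RInt_Chasles (V:=R_NormedModule)) with (1 - Om).
  - apply is_RInt_g_low. lra.
  - apply is_RInt_ext with (fun _ => 1 - c).
    + intros y hy. rewrite Rmin_left in hy by lra. rewrite Rmax_right in hy by lra.
      symmetry. apply g_high. lra.
    + apply (is_RInt_const (V:=R_NormedModule)).
Qed.

Lemma RiemannInt_g x (p : Riemann_integrable (g c) 0 x) : 0 <= x <= 1 ->
  RiemannInt p = G x.
Proof.
  intros hx. rewrite <- RInt_Reals. apply is_RInt_unique.
  unfold G. destruct (Rle_dec x (1 - Om)).
  - apply is_RInt_g_low. lra.
  - apply is_RInt_g_high. lra.
Qed.

Lemma cst_ln_mul_le u w : 0 < u -> 0 < w -> c * (ln u + ln w) <= (1 - c) * (u * w) - Om.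
Proof.
  intros hu hw. pose proof omega_bounds; pose proof cst_omega; pose proof cst_bounds.
  assert (huw : 0 < u * w / Om) by (apply Rdiv_lt_0_compat; nra).
  pose proof (ln_le_sub1 _ huw) as hL.
  unfold Rdiv in hL.
  rewrite ln_mult, ln_mult, ln_Rinv, ln_omega in hL by (try apply Rinv_0_lt_compat; nra).
  assert (E : c * (u * w * / Om) = (1 - c) * (u * w)).
  { apply Rmult_eq_reg_r with Om; [|lra].
    rewrite !Rmult_assoc, Rinv_l by lra.
    replace ((1 - c) * (u * (w * Om))) with ((1 - c) * Om * (u * w)) by ring.
    replace ((1 - c) * Om) with c by lra. ring. }
  apply Rmult_le_compat_l with (r := c) in hL; lra.
Qed.

Lemma G_sum_bound_le x y : 0 <= x <= y -> y <= 1 ->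
  G x + G y + (1 - c) * (1 - x) * (1 - y) >= Om.
Proof.
  intros hxy hy1. pose proof omega_bounds; pose proof cst_omega; pose proof cst_bounds.
  unfold G. destruct (Rle_dec x (1 - Om)), (Rle_dec y (1 - Om)); try lra.
  - pose proof (cst_ln_mul_le (1 - x) (1 - y) ltac:(lra) ltac:(lra)). nra.
  - pose proof (ln_le_sub1 (1 - x) ltac:(lra)).
    assert (c * ln (1 - x) <= c * (- x)) by (apply Rmult_le_compat_l; lra).
    assert (0 <= x * ((1 - c) * (Om - (1 - y)))) by (apply Rmult_le_pos; nra).
    nra.
  - assert (0 <= (1 - c) * ((Om - (1 - x)) * y)) by (apply Rmult_le_pos; nra).
    assert (0 <= (1 - c) * ((Om - (1 - y)) * (1 - Om))) by (apply Rmult_le_pos; nra).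
    assert (0 <= (1 - c) * (Om * (2 * Om - 1))) by (apply Rmult_le_pos; nra).
    nra.
Qed.

Lemma G_sum_bound x y : 0 <= x <= 1 -> 0 <= y <= 1 ->
  G x + G y + (1 - c) * (1 - x) * (1 - y) >= Om.
Proof.
  intros hx hy. destruct (Rle_or_lt x y).
  - apply G_sum_bound_le; lra.
  - pose proof (G_sum_bound_le y x ltac:(lra) ltac:(lra)). lra.
Qed.

End Omega.

Theorem mainTheorem12 (Om : R) (hOm : Om * exp Om = 1)
  (tau gam th : R) (htau0 : 0 <= tau) (htau1 : tau <= 1)
  (hgam0 : 0 <= gam) (hgamth : gam <= th) (hth1 : th <= 1)
  (p1 : Riemann_integrable (g (cst Om)) 0 tau)
  (p2 : Riemann_integrable (g (cst Om)) 0 gam)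
  (p3 : Riemann_integrable (hmin (cst Om) th) tau 1) :
  F (cst Om) tau gam th p1 p2 p3 >= Om.
Proof.
  set (k := (1 - th) * g (cst Om) th).
  assert (hk : k <= cst Om) by (apply weight_le_cst; auto; lra).
  assert (hI : k * (1 - tau) <= RiemannInt p3).
  { rewrite <- (RiemannInt_P15 (RiemannInt_P14 tau 1 k)).
    apply RiemannInt_P19; auto.
    intros y hy. apply hmin_ge_weight; auto; lra. }
  pose proof (G_sum_bound Om hOm tau gam ltac:(lra) ltac:(lra)).
  unfold F. rewrite !RiemannInt_g by (auto; lra).
  assert (0 <= gam * (RiemannInt p3 - k * (1 - tau))) by (apply Rmult_le_pos; lra).
  assert (0 <= (1 - tau) * (1 - gam) * (cst Om - k)) by (apply Rmult_le_pos; [apply Rmult_le_pos|]; lra).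
  fold k. nra.
Qed.
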